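(* Let $n\ge 1$, $d_1,\dots,d_n\ge 1$, $L_i\in\mathbb{C}^{d_i\times d_i}$ ($i=1,\dots,n$) and $C_{i,i-1}\in\mathbb{C}^{d_i\times d_{i-1}}$ ($i=2,\dots,n$). Assume: (i) each $L_i$ is invertible and diagonalizable, $L_iV_i=V_i\Lambda_i$ with $V_i$ invertible and $\Lambda_i=\mathrm{diag}(\lambda_{i,1},\dots,\lambda_{i,d_i})$; (ii) $\sigma(L_i)\cap\sigma(L_j)=\emptyset$ for all $i\neq j$; (iii) $\|L_1\|<\|L_2\|<\cdots<\|L_n\|\le 1$. Then for every $x=(x_1,\dots,x_n)\in\mathbb{C}^{d_1}\times\cdots\times\mathbb{C}^{d_n}$, $$\lim_{t\to\infty}\big\|\mathsf{Lin}^{\circ t}(x)-\mathsf{Nom}^{\circ t}(\mathsf{pert}(x))\big\|_\times=0.$$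
   Context: Each $\mathbb{C}^{d_i}$ carries a fixed norm $\|\cdot\|$, matrices carry the induced operator norm, and $\|(x_1,\dots,x_n)\|_\times=\sum_{i=1}^n\|x_i\|$. The linear chained cascade map is $\mathsf{Lin}(x_1,\dots,x_n)=(L_1x_1,\;L_2x_2+C_{2,1}x_1,\;\dots,\;L_nx_n+C_{n,n-1}x_{n-1})$ and the nominal map is $\mathsf{Nom}(x_1,\dots,x_n)=(L_1x_1,\dots,L_nx_n)$; $\mathsf{F}^{\circ t}$ denotes the $t$-fold iterate. Matrices $D_{i,j}\in\mathbb{C}^{d_i\times d_j}$ ($1\le j\le i\le n$) are defined recursively in $i$: $D_{i,i}=I_{d_i}$; for $i\ge 2$ and $1\le j\le i-1$, let $\tilde C_{i,j}$ have entries $[\tilde C_{i,j}]_{\ell,m}=[V_i^{-1}C_{i,i-1}D_{i-1,j}V_j]_{\ell,m}\,(1-\lambda_{j,m}/\lambda_{i,\ell})^{-1}$ and set $D_{i,j}=L_i^{-1}V_i\tilde C_{i,j}V_j^{-1}$. Define $\mathsf{pert}_1(x_1)=x_1$, $\mathsf{pert}_i(x_1,\dots,x_i)=x_i+\sum_{j=1}^{i-1}(-1)^{i-1-j}D_{i,j}\,\mathsf{pert}_j(x_1,\dots,x_j)$ for $i\ge2$, and $\mathsf{pert}(x)=(\mathsf{pert}_1(x_1),\dots,\mathsf{pert}_n(x_1,\dots,x_n))$. *)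

From mathcomp Require Import all_boot all_order all_algebra all_classical all_reals all_analysis.
From mathcomp Require Import complex.
Set Implicit Arguments. Unset Strict Implicit. Unset Printing Implicit Defensive.
Import Order.TTheory GRing.Theory Num.Theory.
Local Open Scope ring_scope.
Local Open Scope classical_set_scope.

Section Cascade.
Variable R : realType.
Local Notation C := (R[i]).

Definition cabs (c : C) : R := ComplexField.Normc.normc c.

Definition is_norm (m : nat) (N : 'cV[C]_m -> R) : Prop :=
  [/\ forall v, N v = 0 -> v = 0,
      forall (c : C) v, N (c *: v) = cabs c * N v
    & forall u v, N (u + v) <= N u + N v].

Definition opnorm (m : nat) (N : 'cV[C]_m -> R) (A : 'M[C]_m) : R :=
  sup [set N (A *m v) | v in [set v | N v <= 1]].

(* Blocks are indexed by natural numbers 0,...,n-1 (paper's 1,...,n);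
   block i lives in C^(d i). Cc i is the paper's C_{i+2,i+1} : C^(d i) -> C^(d i.+1). *)
Variable d : nat -> nat.
Variable L : forall i, 'M[C]_(d i).
Variable Cc : forall i, 'M[C]_(d i.+1, d i).
Variable V : forall i, 'M[C]_(d i).
Variable lam : forall i, 'rV[C]_(d i).

Definition blockvec := forall i : nat, 'cV[C]_(d i).

Definition Lin (x : blockvec) : blockvec := fun i =>
  match i as i0 return 'cV[C]_(d i0) with
  | 0 => L 0 *m x 0
  | j.+1 => L j.+1 *m x j.+1 + Cc j *m x j
  end.

Definition Nom (x : blockvec) : blockvec := fun i => L i *m x i.

(* Dk j k = D_{k+j, j} (indices as in this file). *)
Fixpoint Dk (j k : nat) : 'M[C]_(d (k + j), d j) :=
  match k as k0 return 'M[C]_(d (k0 + j), d j) with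
  | 0 => 1%:M
  | k'.+1 =>
      let M := invmx (V (k' + j).+1) *m Cc (k' + j) *m Dk j k' *m V j in
      let Ct := \matrix_(l < d (k' + j).+1, m < d j)
                  (M l m * (1 - lam j 0 m / lam (k' + j).+1 0 l)^-1) in
      invmx (L (k' + j).+1) *m V (k' + j).+1 *m Ct *m invmx (V j)
  end.

Definition Dm (i : nat) (j : 'I_i.+1) : 'M[C]_(d i, d j) :=
  castmx (congr1 d (subnK (ltnSE (ltn_ord j))), erefl (d j)) (Dk j (i - j)).

Definition pert_step (x p : blockvec) : blockvec := fun j =>
  x j + \sum_(l < j) ((-1) ^+ (j.-1 - l) *: (Dm (widen_ord (leqnSn j) l) *m p l)).

(* pert_j(x): after j+1 iterations of pert_step starting from x, blocks
   0..j hold pert_0(x),...,pert_j(x). *)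
Definition pert (x : blockvec) : blockvec := fun j => iter j.+1 (pert_step x) x j.

End Cascade.

Definition prodnorm (R : realType) (n : nat) (d : nat -> nat)
  (N : forall i, 'cV[R[i]]_(d i) -> R) (x : blockvec R d) : R :=
  \sum_(i < n) N i (x i).

(* The map unpert, unpert(p)_i = p_i + sum_(l < i) (-1)^(i-l) D_(i,l) p_l, is a
   left inverse of pert and conjugates the nominal map to the cascade:
   Lin o unpert = unpert o Nom.  Blockwise this is the Sylvester equation
   D_(i+1,j) L_j - L_(i+1) D_(i+1,j) = - C_(i+1,i) D_(i,j), which the entrywise
   definition of D solves in the eigenbases V_i because the spectra are
   disjoint and the L_i invertible.  Hence the i-th block of
   Lin^t x - Nom^t (pert x) is sum_(l < i) +- D_(i,l) L_l^t pert_l(x), and every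
   term decays geometrically since ||L_l|| < ||L_n|| <= 1 for l < n.  Operator
   norms are finite because every norm on C^m dominates a multiple of the l1
   norm (a Bolzano-Weierstrass argument on the l1 unit sphere). *)

From Pilot Require Import Defs.
From mathcomp Require Import all_boot all_order all_algebra all_classical all_reals all_analysis.
From mathcomp Require Import complex.
From mathcomp Require Import ring lra.
Import Order.TTheory GRing.Theory Num.Theory.
Import numFieldNormedType.Exports.
Local Open Scope ring_scope.
Local Open Scope classical_set_scope.
Local Open Scope complex_scope.

Set Implicit Arguments.
Unset Strict Implicit.
Unset Printing Implicit Defensive.

Section ComplexModulus.
Variable R : realType.
Local Notation C := R[i].

Lemma cabs_ge0 (z : C) : 0 <= cabs z.
Proof. by case: z => a b; rewrite /cabs /= sqrtr_ge0. Qed.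

Lemma cabs0 : cabs (0 : C) = 0.
Proof. exact: ComplexField.Normc.normc0. Qed.

Lemma cabsM (x y : C) : cabs (x * y) = cabs x * cabs y.
Proof. exact: ComplexField.Normc.normcM. Qed.

Lemma cabs_signr k : cabs ((-1 : C) ^+ k) = 1.
Proof.
elim: k => [|k IH]; first exact: ComplexField.Normc.normc1.
by rewrite exprS cabsM IH mulr1 /cabs normcN ComplexField.Normc.normc1.
Qed.

Lemma cabs_real (a : R) : cabs a%:C = `|a|.
Proof. by rewrite /cabs /= expr0n /= addr0 sqrtr_sqr. Qed.

Lemma Re_le_cabs (z : C) : `|complex.Re z| <= cabs z.
Proof.
case: z => a b; rewrite /cabs /= -sqrtr_sqr ler_wsqrtr //.
by rewrite lerDl sqr_ge0.
Qed.

Lemma Im_le_cabs (z : C) : `|complex.Im z| <= cabs z.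
Proof.
case: z => a b; rewrite /cabs /= -sqrtr_sqr ler_wsqrtr //.
by rewrite lerDr sqr_ge0.
Qed.

Lemma cabs_le_Re_Im (z : C) : cabs z <= `|complex.Re z| + `|complex.Im z|.
Proof.
case: z => a b; rewrite /cabs /=.
have sq_le : a ^+ 2 + b ^+ 2 <= (`|a| + `|b|) ^+ 2.
  rewrite -(real_normK (num_real a)) -(real_normK (num_real b)).
  have := normr_ge0 a; have := normr_ge0 b; move: `|a| `|b| => x y hx hy.
  nra.
by apply: le_trans (ler_wsqrtr sq_le) _; rewrite sqrtr_sqr ger0_norm ?addr_ge0.
Qed.

Definition l1norm m (v : 'cV[C]_m) : R := \sum_k cabs (v k 0).

Lemma l1norm_ge0 m (v : 'cV[C]_m) : 0 <= l1norm v.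
Proof. by apply: sumr_ge0 => k _; exact: cabs_ge0. Qed.

Lemma l1normZ m c (v : 'cV[C]_m) : l1norm (c *: v) = cabs c * l1norm v.
Proof. by rewrite /l1norm big_distrr; apply: eq_bigr => k _; rewrite mxE cabsM. Qed.

Lemma l1normN m (v : 'cV[C]_m) : l1norm (- v) = l1norm v.
Proof. by rewrite -scaleN1r l1normZ (cabs_signr 1) mul1r. Qed.

Lemma cabs_le_l1norm m (v : 'cV[C]_m) k : cabs (v k 0) <= l1norm v.
Proof. by rewrite /l1norm (bigD1 k) //= lerDl sumr_ge0 // => *; exact: cabs_ge0. Qed.

End ComplexModulus.

Section IsNorm.
Variables (R : realType) (m : nat) (N : 'cV[R[i]]_m -> R).
Hypothesis hN : is_norm N.

Lemma is_norm_eq0 v : N v = 0 -> v = 0. Proof. by case: hN => h _ _; apply: h. Qed.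
Lemma is_normZ c v : N (c *: v) = cabs c * N v. Proof. by case: hN => _ h _; apply: h. Qed.
Lemma is_normD u v : N (u + v) <= N u + N v. Proof. by case: hN => _ _ h; apply: h. Qed.

Lemma is_norm0 : N 0 = 0.
Proof. by rewrite -(scale0r (0 : 'cV_m)) is_normZ cabs0 mul0r. Qed.

Lemma is_normN v : N (- v) = N v.
Proof. by rewrite -scaleN1r is_normZ (cabs_signr _ 1) mul1r. Qed.

Lemma is_norm_ge0 v : 0 <= N v.
Proof. by have := is_normD v (- v); rewrite subrr is_norm0 is_normN -mulr2n pmulrn_lge0. Qed.

Lemma is_norm_gt0 v : v != 0 -> 0 < N v.
Proof.
move=> v0; rewrite lt_def is_norm_ge0 andbT.
by apply: contra v0 => /eqP /is_norm_eq0 ->.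
Qed.

Lemma is_norm_sum I (r : seq I) (P : pred I) (F : I -> 'cV_m) :
  N (\sum_(i <- r | P i) F i) <= \sum_(i <- r | P i) N (F i).
Proof.
elim/big_ind2: _ => [|x1 y1 x2 y2 h1 h2|//]; first by rewrite is_norm0.
by apply: le_trans (is_normD _ _) _; exact: lerD.
Qed.

Lemma is_norm_mulmx_le b (A : 'M[R[i]]_(m, b)) (v : 'cV[R[i]]_b) :
  N (A *m v) <= l1norm v * (\sum_k N (A *m delta_mx k 0)).
Proof.
have -> : A *m v = \sum_k v k 0 *: (A *m delta_mx k 0).
  rewrite {1}(matrix_sum_delta v) mulmx_sumr; apply: eq_bigr => k _.
  by rewrite big_ord1 scalemxAr.
apply: le_trans (is_norm_sum _ _ _) _; rewrite /l1norm big_distrl /=.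
apply: ler_sum => k _; rewrite is_normZ ler_wpM2l ?cabs_ge0 //.
by rewrite (bigD1 k) //= lerDl sumr_ge0 // => *; exact: is_norm_ge0.
Qed.

End IsNorm.

Section L1Compactness.
Variable R : realType.
Local Notation C := R[i].

Lemma increasing_seq_geq (f : nat -> nat) : increasing_seq f -> forall j, (j <= f j)%N.
Proof.
move=> /increasing_seqP f_incr; elim=> [//|j IH].
exact: leq_ltn_trans IH (f_incr j).
Qed.

Lemma cvg_comp_increasing (u : nat -> R) (f : nat -> nat) (l : R) :
  increasing_seq f -> u @ \oo --> l -> (u \o f) @ \oo --> l.
Proof.
move=> f_incr ul; apply: cvg_comp ul => A [j0 _ j0A]; exists j0 => // j /= j0j.
exact/j0A/(leq_trans j0j)/increasing_seq_geq.
Qed.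

Lemma bounded_fun_le (u : nat -> R) M : (forall j, `|u j| <= M) -> bounded_fun u.
Proof.
move=> uM; exists M; split=> [|K MK j _]; first exact: num_real.
exact: le_trans (uM j) (ltW MK).
Qed.

Lemma bolzano_weierstrass_family (I : eqType) (s : seq I) (u : I -> nat -> R) :
  (forall i, bounded_fun (u i)) ->
  exists2 f : nat -> nat, increasing_seq f & forall i, i \in s -> cvgn (u i \o f).
Proof.
move=> u_bnd; elim: s => [|i s [f f_incr f_cvg]]; first by exists id.
have uf_bnd : bounded_fun (u i \o f).
  by have [M [M_real uM]] := u_bnd i; exists M; split=> // K MK j _; exact: uM.
have [g g_incr g_cvg] := bolzano_weierstrass uf_bnd.
exists (f \o g).
  apply/increasing_seqP => j /=.
  by rewrite (leW_mono f_incr) //; move/increasing_seqP: g_incr; apply.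
move=> k; rewrite inE => /predU1P[->//|ks].
have /cvg_ex[l ul] := f_cvg k ks.
exact: cvgP (cvg_comp_increasing g_incr ul).
Qed.

Lemma cvg_sum0 (I : Type) (r : seq I) (u : I -> nat -> R) :
  (forall i, u i @ \oo --> 0) -> (fun j => \sum_(i <- r) u i j) @ \oo --> 0.
Proof.
move=> u0; rewrite -[X in _ --> X](@big1_eq R 0 +%R _ r xpredT).
by apply: cvg_big => //; exact: add_continuous.
Qed.

Lemma l1norm_seq_cluster m (w : nat -> 'cV[C]_m) : (forall j, l1norm (w j) <= 1) ->
  exists w0 : 'cV[C]_m, exists2 f : nat -> nat,
    increasing_seq f & (fun j => l1norm (w0 - w (f j))) @ \oo --> 0.
Proof.
move=> w_le1.
pose u (bk : bool * 'I_m) j :=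
  if bk.1 then complex.Re (w j bk.2 0) else complex.Im (w j bk.2 0).
have u_bnd bk : bounded_fun (u bk).
  apply: (@bounded_fun_le _ 1) => j; apply: le_trans (w_le1 j).
  rewrite /u; case: ifP => _; apply: le_trans (cabs_le_l1norm _ bk.2);
    [exact: Re_le_cabs | exact: Im_le_cabs].
have [f f_incr f_cvg] := bolzano_weierstrass_family (enum {: bool * 'I_m}) u_bnd.
pose a bk := lim (u bk \o f @ \oo).
have ua bk : u bk \o f @ \oo --> a bk by apply: f_cvg; rewrite mem_enum.
have dist0 bk : (fun j => `|a bk - u bk (f j)|) @ \oo --> 0.
  by apply/norm_cvg0P; rewrite -(subrr (a bk)); exact: cvgB (cvg_cst _) (ua bk).
exists (\col_k (a (true, k) +i* a (false, k))), f => //.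
apply: (@squeeze_cvgr _ _ _ _ (cst 0) (fun j => \sum_k
   (`|a (true, k) - u (true, k) (f j)| + `|a (false, k) - u (false, k) (f j)|))).
- near=> j; rewrite l1norm_ge0 /=; apply: ler_sum => k _.
  apply: le_trans (cabs_le_Re_Im _) _.
  by rewrite !mxE /u /=; case: (w (f j) k 0).
- exact: cvg_cst.
- by apply: cvg_sum0 => k; rewrite -(addr0 0); exact: cvgD.
Unshelve. all: by end_near. Qed.

End L1Compactness.

Section NormEquivalence.
Variables (R : realType) (m : nat) (N : 'cV[R[i]]_m -> R).
Hypothesis hN : is_norm N.

Lemma l1norm_le_is_norm : exists K, forall v, l1norm v <= K * N v.
Proof.
apply: contrapT => noK.
have small j : exists v, l1norm v = 1 /\ N v < j.+1%:R^-1.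
  have [v jNv] : exists v, j.+1%:R * N v < l1norm v.
    apply: contrapT => hj; apply: noK; exists j.+1%:R => v.
    by rewrite leNgt; apply/negP => hv; apply: hj; exists v.
  have l1v : 0 < l1norm v.
    exact: le_lt_trans (mulr_ge0 (ler0n _ _) (is_norm_ge0 hN v)) jNv.
  have c_ge0 : 0 <= (l1norm v)^-1 by rewrite invr_ge0 ltW.
  exists ((l1norm v)^-1%:C *: v); rewrite l1normZ is_normZ // cabs_real ger0_norm //.
  split; first by rewrite mulVf // gt_eqF.
  by rewrite ltr_pdivrMl // ltr_pdivlMr ?ltr0Sn // mulrC.
have [w w_small] := choice small.
have [w0 [f f_incr w0_cvg]] : exists w0, exists2 f : nat -> nat,
    increasing_seq f & (fun j => l1norm (w0 - w (f j))) @ \oo --> 0.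
  by apply: l1norm_seq_cluster => j; rewrite (w_small j).1.
pose B := \sum_k N (1%:M *m delta_mx k 0).
have Nw0 : N w0 <= 0.
  apply: (ler_cvg_to (cvg_cst (N w0))
    (_ : (fun j => l1norm (w0 - w (f j)) * B + j.+1%:R^-1) @ \oo --> 0)).
    rewrite -(addr0 0) -{1}(mul0r B); apply: cvgD; last exact: cvg_harmonic.
    exact: cvgMl.
  near=> j; rewrite -{1}(subrK (w (f j)) w0); apply: le_trans (is_normD hN _ _) _.
  apply: lerD; first by move: (is_norm_mulmx_le hN 1%:M (w0 - w (f j))); rewrite mul1mx.
  apply: ltW; apply: lt_le_trans (w_small _).2 _.
  by rewrite lef_pV2 ?posrE ?ltr0Sn // ler_nat ltnS increasing_seq_geq.
have w00 : w0 = 0 by apply: (is_norm_eq0 hN); apply/le_anti; rewrite Nw0 is_norm_ge0.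
have : (1 : R) <= 0.
  apply: (ler_cvg_to (cvg_cst (1 : R)) w0_cvg).
  by near=> j; rewrite w00 sub0r l1normN (w_small _).1.
by rewrite ler10.
Unshelve. all: by end_near. Qed.

End NormEquivalence.

Lemma is_norm_mulmx_bounded (R : realType) a b (Na : 'cV[R[i]]_a -> R)
    (Nb : 'cV[R[i]]_b -> R) (A : 'M[R[i]]_(a, b)) :
  is_norm Na -> is_norm Nb -> exists2 K, 0 <= K & forall v, Na (A *m v) <= K * Nb v.
Proof.
move=> hNa hNb; have [K hK] := l1norm_le_is_norm hNb.
pose B := \sum_k Na (A *m delta_mx k 0).
have B_ge0 : 0 <= B by apply: sumr_ge0 => k _; exact: is_norm_ge0.
exists (`|K| * B); first by rewrite mulr_ge0.
move=> v; apply: le_trans (is_norm_mulmx_le hNa A v) _.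
rewrite mulrAC ler_wpM2r //; apply: le_trans (hK v) _.
by rewrite ler_wpM2r ?(is_norm_ge0 hNb) ?ler_norm.
Qed.

Section OperatorNorm.
Variables (R : realType) (m : nat) (N : 'cV[R[i]]_m -> R) (A : 'M[R[i]]_m).
Hypothesis hN : is_norm N.

Let S := [set N (A *m v) | v in [set v | N v <= 1]].

Let has_sup_S : has_sup S.
Proof.
have [K K_ge0 hK] := is_norm_mulmx_bounded A hN hN.
split; first by exists 0, 0; rewrite /= ?is_norm0 // mulmx0 is_norm0.
exists K => _ [v /= Nv1 <-]; apply: le_trans (hK v) _.
by rewrite -[leRHS]mulr1 ler_wpM2l.
Qed.

Lemma opnorm_ge0 : 0 <= opnorm N A.
Proof.
apply: (sup_upper_bound has_sup_S).
by exists 0; rewrite /= ?is_norm0 // mulmx0 is_norm0.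
Qed.

Lemma opnorm_mulmx_le v : N (A *m v) <= opnorm N A * N v.
Proof.
have [->|v0] := eqVneq v 0; first by rewrite mulmx0 !is_norm0 // mulr0.
have Nv_gt0 := is_norm_gt0 hN v0.
have c_ge0 : 0 <= (N v)^-1 by rewrite invr_ge0 ltW.
have Nw1 : N ((N v)^-1%:C *: v) = 1.
  by rewrite is_normZ // cabs_real ger0_norm // mulVf // gt_eqF.
have : N (A *m ((N v)^-1%:C *: v)) <= opnorm N A.
  by apply: (sup_upper_bound has_sup_S); exists ((N v)^-1%:C *: v); rewrite //= Nw1.
rewrite -scalemxAr is_normZ // cabs_real ger0_norm // ler_pdivrMl //.
by rewrite mulrC.
Qed.

End OperatorNorm.

Lemma sylvester_diag_solution (R : realType) p q (M : 'M[R[i]]_(p, q))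
    (a : 'rV[R[i]]_p) (b : 'rV[R[i]]_q) :
  (forall x, a 0 x != 0) -> (forall x y, a 0 x != b 0 y) ->
  let X := \matrix_(x, y) (M x y * (1 - b 0 y / a 0 x)^-1) in
  X *m diag_mx b - diag_mx a *m X = - (diag_mx a *m M).
Proof.
move=> a_neq0 a_neq_b X; apply/matrixP => x y.
rewrite mul_mx_diag !mul_diag_mx !mxE.
have ab_neq0 : 1 - b 0 y / a 0 x != 0.
  rewrite subr_eq0 eq_sym; apply: contra (a_neq_b x y) => /eqP ab1.
  by rewrite -[a 0 x]mul1r -ab1 mulfVK.
move: (a 0 x) (b 0 y) (a_neq0 x) ab_neq0 => ax bx ax_neq0 ab_neq0.
field; rewrite ax_neq0 /=; apply: contra ab_neq0 => /eqP/subr0_eq <-.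
by rewrite divff // subrr.
Qed.

Section Cascade.
Variable R : realType.
Local Notation C := R[i].
Variables (d : nat -> nat) (L : forall i, 'M[C]_(d i))
  (Cc : forall i, 'M[C]_(d i.+1, d i)) (V : forall i, 'M[C]_(d i))
  (lam : forall i, 'rV[C]_(d i)).

Local Notation Dk := (Dk L Cc V lam).
Local Notation Dm := (Dm L Cc V lam).

Definition diag_decomp i :=
  [/\ L i \in unitmx, V i \in unitmx & L i *m V i = V i *m diag_mx (lam i)].

Lemma diag_decomp_invmx i :
  diag_decomp i -> invmx (V i) *m L i = diag_mx (lam i) *m invmx (V i).
Proof.
case=> _ V_unit LV; rewrite -[LHS]mulmx1 -(mulmxV V_unit) mulmxA.
by rewrite -(mulmxA (invmx (V i))) LV mulmxA mulVmx // mul1mx.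
Qed.

Lemma eigenvalue_lam i x : diag_decomp i -> eigenvalue (L i) (lam i 0 x).
Proof.
move=> dec_i; have [_ V_unit _] := dec_i; apply/eigenvalueP.
exists (delta_mx 0 x *m invmx (V i)).
  rewrite -mulmxA diag_decomp_invmx // mulmxA scalemxAl; congr (_ *m _).
  rewrite mul_mx_diag; apply/matrixP => y z; rewrite !mxE.
  by case: (z =P x) => [->|]; rewrite ?andbF ?andbT ?mul0r ?mulr0 // mulrC.
apply/eqP => /(congr1 (mulmx^~ (V i))); rewrite mul0mx mulmxKV //.
by move/matrixP/(_ 0 x); rewrite !mxE !eqxx /= => /eqP; rewrite oner_eq0.
Qed.

Lemma lam_neq0 i x : diag_decomp i -> lam i 0 x != 0.
Proof.
move=> dec_i; have [L_unit _ _] := dec_i.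
have /eigenvalueP [v Lv v0] := eigenvalue_lam x dec_i.
apply: contra v0 => /eqP lam0.
by rewrite lam0 scale0r in Lv; rewrite -(mulmxK L_unit v) Lv mul0mx.
Qed.

Lemma Dk_sylvester l k : let i := (k + l).+1 in
  diag_decomp l -> diag_decomp i -> (forall x y, lam i 0 x != lam l 0 y) ->
  Dk l k.+1 *m L l - L i *m Dk l k.+1 = - (Cc (k + l) *m Dk l k).
Proof.
move=> i dec_l dec_i lam_neq; have [Li_unit Vi_unit LVi] := dec_i.
have [_ Vl_unit _] := dec_l.
rewrite [Dk l k.+1]/= -/i.
set M := invmx (V i) *m Cc (k + l) *m Dk l k *m V l.
set X := \matrix_(x, y) _.
have XLam : X *m diag_mx (lam l) - diag_mx (lam i) *m X = - (diag_mx (lam i) *m M).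
  exact: sylvester_diag_solution (fun x => lam_neq0 x dec_i) lam_neq.
apply: (can_inj (mulKmx Li_unit)); rewrite mulmxBr.
have LD : L i *m (invmx (L i) *m V i *m X *m invmx (V l)) = V i *m X *m invmx (V l).
  by rewrite !mulmxA mulmxV // mul1mx.
have -> : L i *m (invmx (L i) *m V i *m X *m invmx (V l) *m L l) =
    V i *m (X *m diag_mx (lam l)) *m invmx (V l).
  rewrite !mulmxA mulmxV // mul1mx -(mulmxA _ (invmx (V l))).
  by rewrite diag_decomp_invmx // !mulmxA.
have -> : L i *m (L i *m (invmx (L i) *m V i *m X *m invmx (V l))) =
    V i *m (diag_mx (lam i) *m X) *m invmx (V l).
  by rewrite LD !mulmxA LVi.
rewrite -mulmxBl -mulmxBr XLam mulmxN mulNmx mulmxN; congr (- _).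
by rewrite /M !mulmxA -LVi mulmxK // mulmxK.
Qed.

Lemma DmE i (j : 'I_i.+1) k (e : (k + j)%N = i) :
  Dm j = castmx (congr1 d e, erefl) (Dk j k).
Proof.
rewrite /Defs.Dm; move: (subnK _).
have -> : (i - j)%N = k by apply/eqP; rewrite -(eqn_add2r j) subnK ?e // -ltnS.
by move=> e'; rewrite (eq_irrelevance e' e).
Qed.

Lemma Dm_diag i : Dm (@ord_max i) = 1%:M.
Proof. by rewrite (@DmE i ord_max 0 (add0n _)) castmx_id. Qed.

Lemma castmx_Dk_sylvester l k i (e : (k + l)%N = i) (e' : (k.+1 + l)%N = i.+1) :
  diag_decomp l -> diag_decomp i.+1 -> (forall x y, lam i.+1 0 x != lam l 0 y) ->
  castmx (congr1 d e', erefl) (Dk l k.+1) *m L l -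
  L i.+1 *m castmx (congr1 d e', erefl) (Dk l k.+1) =
  - (Cc i *m castmx (congr1 d e, erefl) (Dk l k)).
Proof.
move: e'; case: i / e => e'; rewrite (eq_irrelevance e' erefl) !castmx_id.
exact: Dk_sylvester.
Qed.

Definition Dlow i (l : 'I_i) := Dm (widen_ord (leqnSn i) l).

Lemma Dm_sylvester i (l : 'I_i.+1) :
  diag_decomp l -> diag_decomp i.+1 -> (forall x y, lam i.+1 0 x != lam l 0 y) ->
  Dlow l *m L l - L i.+1 *m Dlow l = - (Cc i *m Dm l).
Proof.
have li : (l <= i)%N by rewrite -ltnS.
have e : (i - l + l)%N = i by rewrite subnK.
have e' : ((i - l).+1 + l)%N = i.+1 by rewrite addSn e.
by rewrite /Dlow (DmE (j := widen_ord _ l) e') (DmE e); exact: castmx_Dk_sylvester.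
Qed.

Definition unpert (p : blockvec R d) : blockvec R d := fun i =>
  p i + \sum_(l < i) (-1) ^+ (i - l) *: (Dlow l *m p l).

Lemma pertE x j : pert L Cc V lam x j =
  x j + \sum_(l < j) (-1) ^+ (j.-1 - l) *: (Dlow l *m pert L Cc V lam x l).
Proof.
pose q k := iter k (pert_step L Cc V lam x) x.
have q_stable k j' : (j' < k)%N -> q k j' = q j'.+1 j'.
  elim/ltn_ind: k j' => -[//|k] IH j' j'k.
  rewrite /q /= /pert_step; congr (_ + _); apply: eq_bigr => l _.
  have lj := ltn_ord l; congr (_ *: (_ *m _)).
  by rewrite -/(q k l) -/(q j' l) IH ?(IH j') // (leq_trans lj).
rewrite /pert -/(q j.+1) /q /= /pert_step -/(q j).
by congr (_ + _); apply: eq_bigr => l _; rewrite q_stable.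
Qed.

Lemma unpert_pert x j : unpert (pert L Cc V lam x) j = x j.
Proof.
rewrite /unpert pertE -addrA -big_split /= big1 ?addr0 // => l _.
have -> : (j - l)%N = (j.-1 - l).+1 by case: j l => [[]//|j] l /=; rewrite subSn // -ltnS.
by rewrite exprS mulN1r scaleNr addrN.
Qed.

Lemma Lin_congr (y z : blockvec R d) i :
  (forall k, (k <= i)%N -> y k = z k) -> Lin L Cc y i = Lin L Cc z i.
Proof. by case: i => [|i] yz /=; rewrite !yz. Qed.

Lemma iter_Lin_congr t (y z : blockvec R d) i :
  (forall k, (k <= i)%N -> y k = z k) ->
  iter t (Lin L Cc) y i = iter t (Lin L Cc) z i.
Proof.
elim: t i => [|t IH] i yz /=; first exact: yz.
by apply: Lin_congr => k ki; apply: IH => k' k'k; apply/yz/(leq_trans k'k).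
Qed.

Variable n : nat.
Hypothesis decn : forall i, (i < n)%N -> diag_decomp i.
Hypothesis lam_neqn : forall p q x y, (p < n)%N -> (q < n)%N -> p != q ->
  lam p 0 x != lam q 0 y.

Lemma Lin_unpert (p : blockvec R d) i :
  (i < n)%N -> Lin L Cc (unpert p) i = unpert (Nom L p) i.
Proof.
case: i => [_|i iln]; first by rewrite /Lin /unpert /Nom !big_ord0 !addr0.
have term (l : 'I_i.+1) :
    (-1) ^+ (i.+1 - l) *: (Dlow l *m (L l *m p l)) =
    L i.+1 *m ((-1) ^+ (i.+1 - l) *: (Dlow l *m p l)) +
    Cc i *m ((-1) ^+ (i - l) *: (Dm l *m p l)).
  have li : (l <= i)%N by rewrite -ltnS.
  have ln : (l < n)%N by apply: leq_ltn_trans (ltnW iln).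
  have /eqP := Dm_sylvester (decn ln) (decn iln)
    (fun x y => lam_neqn x y iln ln (negbT (gtn_eqF (ltn_ord l)))).
  rewrite mulmxA subr_eq => /eqP ->.
  rewrite subSn // exprS mulN1r scaleNr mulmxDl !scalerDr -!scalemxAr.
  by rewrite !mulmxA mulNmx scalerN opprD opprK scaleNr addrC.
rewrite /Lin /unpert /Nom (eq_bigr _ (fun l _ => term l)) big_split /=.
rewrite -!mulmx_sumr [\sum_(l < i.+1) _ *: (Dm _ *m _)]big_ord_recr /=.
rewrite subnn expr0 scale1r Dm_diag mul1mx.
by rewrite mulmxDr addrA [p i + _]addrC.
Qed.

Lemma iter_Lin_unpert t (p : blockvec R d) i : (i < n)%N ->
  iter t (Lin L Cc) (unpert p) i = unpert (iter t (Nom L) p) i.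
Proof.
elim: t i => [//|t IH] i iln /=.
rewrite -Lin_unpert //; apply: Lin_congr => k ki.
exact/IH/(leq_ltn_trans ki).
Qed.

Lemma iter_Lin_sub_Nom_pert t x i : (i < n)%N ->
  iter t (Lin L Cc) x i - iter t (Nom L) (pert L Cc V lam x) i =
  \sum_(l < i) (-1) ^+ (i - l) *: (Dlow l *m iter t (Nom L) (pert L Cc V lam x) l).
Proof.
move=> iln; rewrite (@iter_Lin_congr t x (unpert (pert L Cc V lam x))).
  by rewrite iter_Lin_unpert // /unpert addrC addKr.
by move=> k _; rewrite unpert_pert.
Qed.

End Cascade.

Lemma iter_Nom (R : realType) d (L : forall i, 'M[R[i]]_(d i)) t p l :
  iter t (Nom L) p l = L l ^+ t *m p l.
Proof. by elim: t => [|t IH]; rewrite ?mul1mx //= /Nom IH exprS -mulmxE mulmxA. Qed.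

Lemma mulmx_pow_cvg0 (R : realType) a b (Na : 'cV[R[i]]_a -> R) (Nb : 'cV[R[i]]_b -> R)
    (A : 'M[R[i]]_(a, b)) (B : 'M[R[i]]_b) v :
  is_norm Na -> is_norm Nb -> opnorm Nb B < 1 ->
  (fun t => Na (A *m (B ^+ t *m v))) @ \oo --> 0.
Proof.
move=> hNa hNb B_lt1; have [K K_ge0 hK] := is_norm_mulmx_bounded A hNa hNb.
have op_ge0 := opnorm_ge0 B hNb.
have pow_le t : Nb (B ^+ t *m v) <= opnorm Nb B ^+ t * Nb v.
  elim: t => [|t IH]; first by rewrite expr0 mul1mx mul1r.
  rewrite exprS -mulmxE -mulmxA; apply: le_trans (opnorm_mulmx_le _ hNb _) _.
  by rewrite exprS -mulrA ler_wpM2l.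
apply: (@squeeze_cvgr _ _ _ _ (cst 0) (geometric (K * Nb v) (opnorm Nb B))).
- near=> t; rewrite is_norm_ge0 //=; apply: le_trans (hK _) _.
  by rewrite -mulrA ler_wpM2l // mulrC.
- exact: cvg_cst.
- by apply: cvg_geometric; rewrite ger0_norm.
Unshelve. all: by end_near. Qed.

Lemma lt_last_of_chain (R : numDomainType) (a : nat -> R) n :
  (forall i, (i.+1 < n)%N -> a i < a i.+1) -> forall l, (l.+1 < n)%N -> a l < a n.-1.
Proof.
move=> a_incr l ln; have n_gt0 : (0 < n)%N by apply: leq_ltn_trans ln.
apply: (@homo_ltn_in _ [pred i | (i < n)%N] _ <%R lt_trans) => //=.
- by move=> i j _ jn k /andP[_ kj]; rewrite inE (ltn_trans kj jn).
- by move=> i _ i1n; exact: a_incr.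
- by rewrite inE; apply: ltnW.
- by rewrite inE prednK.
- by rewrite -ltnS prednK.
Qed.

Theorem corollary1 (R : realType) (n : nat) (d : nat -> nat)
  (L : forall i, 'M[R[i]]_(d i)) (Cc : forall i, 'M[R[i]]_(d i.+1, d i))
  (V : forall i, 'M[R[i]]_(d i)) (lam : forall i, 'rV[R[i]]_(d i))
  (N : forall i, 'cV[R[i]]_(d i) -> R) :
  (1 <= n)%N ->
  (forall i, (i < n)%N -> (1 <= d i)%N) ->
  (forall i, (i < n)%N -> is_norm (N i)) ->
  (* (i) *)
  (forall i, (i < n)%N ->
     [/\ L i \in unitmx, V i \in unitmx & L i *m V i = V i *m diag_mx (lam i)]) ->
  (* (ii) *)
  (forall p q, (p < n)%N -> (q < n)%N -> p <> q ->
     forall a : R[i], eigenvalue (L p) a -> ~ eigenvalue (L q) a) ->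
  (* (iii) *)
  (forall i, (i.+1 < n)%N -> opnorm (N i) (L i) < opnorm (N i.+1) (L i.+1)) ->
  opnorm (N n.-1) (L n.-1) <= 1 ->
  forall x : blockvec R d,
    (fun t : nat => prodnorm n N (fun i => iter t (Lin L Cc) x i
                      - iter t (Nom L) (pert L Cc V lam x) i)) @ \oo --> 0.
Proof.
move=> _ _ hN dec spec op_incr op_last x.
have lam_neq p q a b : (p < n)%N -> (q < n)%N -> p != q -> lam p 0 a != lam q 0 b.
  move=> pn qn /eqP pq; apply/eqP => lam_eq.
  apply: (spec p q pn qn pq (lam p 0 a)); first exact: eigenvalue_lam (dec p pn).
  by rewrite lam_eq; exact: eigenvalue_lam (dec q qn).
have op_lt1 l : (l.+1 < n)%N -> opnorm (N l) (L l) < 1.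
  by move=> ln; exact: lt_le_trans (lt_last_of_chain op_incr ln) op_last.
set p := pert L Cc V lam x.
apply: (@squeeze_cvgr _ _ _ _ (cst 0) (fun t => \sum_(i < n) \sum_(l < i)
    N i (Dlow L Cc V lam l *m iter t (Nom L) p l))).
- near=> t; apply/andP; split.
    by apply: sumr_ge0 => i _; apply: is_norm_ge0; exact: hN.
  apply: ler_sum => i _; have hNi := hN i (ltn_ord i).
  rewrite (iter_Lin_sub_Nom_pert Cc dec lam_neq) //.
  apply: le_trans (is_norm_sum hNi _ _ _) _.
  by apply: ler_sum => l _; rewrite is_normZ // cabs_signr mul1r.
- exact: cvg_cst.
- apply: cvg_sum0 => i; apply: cvg_sum0 => l.
  have ln : (l.+1 < n)%N by apply: leq_ltn_trans (ltn_ord i).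
  under eq_fun do rewrite iter_Nom.
  exact: mulmx_pow_cvg0 (hN i (ltn_ord i)) (hN l (ltnW ln)) (op_lt1 l ln).
Unshelve. all: by end_near. Qed.
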